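(* Let $F(\mathbf{w})=\mathbb{E}_{\mathbf{x}\sim\mathcal{X}}[f(\mathbf{w},\mathbf{x})]$ satisfy (PL) with constant $\alpha>0$, (Smooth) with constant $\beta>0$, and (Bounded variance) with constant $V\ge0$; let $F^*=\min_{\mathbf{w}}F(\mathbf{w})$. Let $S$ be a positive integer and $\eta\in(0,2(S\beta)^{-1})$; define $\gamma=\eta\alpha(2-\eta\beta)$, $\Delta=\frac{1}{2\gamma}\eta^2\beta V$, and $\xi(S)=\frac{2-\eta\beta}{2-S\eta\beta}$. Run scaled SGD at scale $S$ with constant learning rate $\mathrm{lr}(t)=S\eta$ for $T$ iterations from $\mathbf{w}_0$. Then \[ \mathbb{E}[F(\mathbf{w}_T)-F^*]\le\Big(1-\frac{\gamma}{\xi(S)}\Big)^{ST}[F(\mathbf{w}_0)-F^*]+\xi(S)\,\Delta. \]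
   Context: Setting: $\mathcal{X}$ is a distribution over batches; $f(\cdot,\mathbf{x})$ and $F$ are differentiable with $\mathbb{E}_{\mathbf{x}\sim\mathcal{X}}[\nabla_{\mathbf{w}}f(\mathbf{w},\mathbf{x})]=\nabla F(\mathbf{w})$. $\sigma_{\mathbf{g}}^2(\mathbf{w})=\mathrm{tr}\big(\mathrm{cov}_{\mathbf{x}\sim\mathcal{X}}(\nabla_{\mathbf{w}}f(\mathbf{w},\mathbf{x}),\nabla_{\mathbf{w}}f(\mathbf{w},\mathbf{x}))\big)$. (PL): $F(\mathbf{w})-F^*\le\frac1{2\alpha}\|\nabla F(\mathbf{w})\|^2$ for all $\mathbf{w}$. (Smooth): $\|\nabla F(\mathbf{w})-\nabla F(\mathbf{w}')\|\le\beta\|\mathbf{w}-\mathbf{w}'\|$. (Bounded variance): $\sigma_{\mathbf{g}}^2(\mathbf{w})\le V$ for all $\mathbf{w}$. Scaled SGD with scale $S$, schedule $\mathrm{lr}$, $T$ iterations: for $t=0,\dots,T-1$, draw $S$ batches $\mathbf{x}^{(1)},\dots,\mathbf{x}^{(S)}\sim\mathcal{X}$ independently of each other and of the past, set $\bar{\mathbf{g}}_t=\frac1S\sum_{i=1}^S\nabla_{\mathbf{w}}f(\mathbf{w}_t,\mathbf{x}^{(i)})$ and $\mathbf{w}_{t+1}=\mathbf{w}_t-\mathrm{lr}(t)\bar{\mathbf{g}}_t$; output $\mathbf{w}_T$. *)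

From HB Require Import structures.
From mathcomp Require Import all_boot all_order all_algebra.
From mathcomp Require Import all_classical all_reals all_analysis.
Set Implicit Arguments. Unset Strict Implicit. Unset Printing Implicit Defensive.
Import Order.TTheory GRing.Theory Num.Theory.
Import numFieldNormedType.Exports.
Local Open Scope ring_scope.
Local Open Scope classical_set_scope.

Section Defs.
Context {R : realType} {dmn : nat}.
Local Notation vec := 'rV[R]_dmn.

Definition dotv (u v : vec) : R := \sum_(i < dmn) u ord0 i * v ord0 i.
Definition sqnorm (u : vec) : R := dotv u u.

Definition has_gradient (F : vec -> R) (gF : vec -> vec) : Prop :=
  forall w, differentiable F w /\ forall h, 'd F w h = dotv (gF w) h.

Context {d : measure_display} {T : measurableType d}.

Definition trace_cov (X : probability T R) (g : T -> vec) : \bar R :=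
  (\sum_(i < dmn)
     \int[X]_x (((g x ord0 i) - fine (\int[X]_y (g y ord0 i)%:E)) ^+ 2)%:E)%E.

(* Expectation over the S independent batches drawn in one step of scaled SGD:
   iter_batches k h acc = E_{x_1..x_k iid X}[ h (acc + sum_j gf x_j) ] *)
Fixpoint iter_batches (X : probability T R) (gf : T -> vec) (k : nat)
    (h : vec -> \bar R) (acc : vec) : \bar R :=
  match k with
  | 0 => h acc
  | k'.+1 => (\int[X]_x iter_batches X gf k' h (acc + gf x))%E
  end.

Definition sgd_step (X : probability T R) (gradf : vec -> T -> vec)
    (S : nat) (lr : R) (g : vec -> \bar R) (w : vec) : \bar R :=
  iter_batches X (gradf w) S (fun acc => g (w - lr *: (S%:R^-1 *: acc))) 0.

(* sgd_expect t0 n g w = E[g(w_{t0+n})] when scaled SGD is run from w_{t0} = w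
   at times t0, ..., t0+n-1 with schedule lr, drawing fresh batches at each
   step independently of the past. *)
Fixpoint sgd_expect (X : probability T R) (gradf : vec -> T -> vec)
    (S : nat) (lr : nat -> R) (t0 n : nat) (g : vec -> \bar R) (w : vec)
    : \bar R :=
  match n with
  | 0 => g w
  | n'.+1 => sgd_step X gradf S (lr t0)
               (sgd_expect X gradf S lr t0.+1 n' g) w
  end.

End Defs.

From HB Require Import structures.
From mathcomp Require Import all_boot all_order all_algebra.
From mathcomp Require Import all_classical all_reals all_analysis.
From mathcomp Require Import ring lra.
Import Order.TTheory GRing.Theory Num.Theory.
Import numFieldNormedType.Exports.
Local Open Scope ring_scope.
Local Open Scope classical_set_scope.

(* One step of scaled SGD with learning rate S eta moves w to
   w - eta (g_1 + ... + g_S), the g_j being independent unbiased estimates of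
   grad F(w).  The proof combines three facts:
   - the descent lemma: F(w + h) <= F(w) + <grad F(w), h> + beta/2 |h|^2,
     obtained from the mean value theorem along the segment [w, w + h];
   - a moment computation: averaging a quadratic A + <u, a> + c |a|^2 over
     the batch sum a = acc + g_1 + ... + g_k gives again such a quadratic in
     acc, since the noise g_j - grad F(w) has mean zero and total variance
     at most V;
   - (PL), which turns the resulting bound into the one-step contraction
     E[F(w') - Fstar] <= c (F(w) - Fstar) + (1 - c) xi Delta with
     c = 1 - S eta alpha (2 - S eta beta) = 1 - S gamma / xi.
   Iterating T times and using Bernoulli's inequality c <= (1 - gamma/xi)^S
   gives the theorem.  When alpha > beta, (PL) and the descent lemma force
   grad F = 0, so F = Fstar everywhere and the bound is trivial. *)

Section InnerProduct.
Context {R : realType} {dmn : nat}.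
Local Notation vec := 'rV[R]_dmn.

Lemma dotvC (u v : vec) : dotv u v = dotv v u.
Proof. by apply: eq_bigr => i _; rewrite mulrC. Qed.

Lemma dotvDl (u v z : vec) : dotv (u + v) z = dotv u z + dotv v z.
Proof. by rewrite /dotv -big_split; apply: eq_bigr => i _; rewrite !mxE mulrDl. Qed.

Lemma dotvZl a (u v : vec) : dotv (a *: u) v = a * dotv u v.
Proof. by rewrite /dotv mulr_sumr; apply: eq_bigr => i _; rewrite !mxE mulrA. Qed.

Lemma dotvBl (u v z : vec) : dotv (u - v) z = dotv u z - dotv v z.
Proof. by rewrite dotvDl -scaleN1r dotvZl mulN1r. Qed.

Lemma dotvDr (u v z : vec) : dotv z (u + v) = dotv z u + dotv z v.
Proof. by rewrite dotvC dotvDl !(dotvC z). Qed.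

Lemma dotvZr a (u v : vec) : dotv v (a *: u) = a * dotv v u.
Proof. by rewrite dotvC dotvZl dotvC. Qed.

Lemma dotv0l (u : vec) : dotv 0 u = 0.
Proof. by rewrite /dotv big1 // => i _; rewrite mxE mul0r. Qed.

Lemma sqnorm_ge0 (u : vec) : 0 <= sqnorm u.
Proof. by rewrite /sqnorm /dotv sumr_ge0 // => i _; rewrite -expr2 sqr_ge0. Qed.

Lemma sqnormD (u v : vec) : sqnorm (u + v) = sqnorm u + 2 * dotv u v + sqnorm v.
Proof. by rewrite /sqnorm dotvDl !dotvDr (dotvC v u); ring. Qed.

Lemma sqnormZ a (u : vec) : sqnorm (a *: u) = a ^+ 2 * sqnorm u.
Proof. by rewrite /sqnorm dotvZl dotvZr; ring. Qed.

(* A Cauchy-Schwarz type bound: |a| <= k |h| implies <a, h> <= k |h|^2.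
   It follows from 0 <= |a - k h|^2 without taking square roots. *)
Lemma dotv_le_sqnorm (k : R) (a h : vec) :
  0 < k -> sqnorm a <= k ^+ 2 * sqnorm h -> dotv a h <= k * sqnorm h.
Proof.
move=> k0 ah; have := sqnorm_ge0 (a + (- k) *: h).
rewrite sqnormD dotvZr sqnormZ sqrrN => expand; nra.
Qed.

Lemma sqnorm_le_of_sqrt (k : R) (a h : vec) : 0 <= k ->
  Num.sqrt (sqnorm a) <= k * Num.sqrt (sqnorm h) -> sqnorm a <= k ^+ 2 * sqnorm h.
Proof.
move=> k0 ah; rewrite -(sqr_sqrtr (sqnorm_ge0 a)) -(sqr_sqrtr (sqnorm_ge0 h)) -exprMn.
by rewrite ler_pXn2r // ?nnegrE ?sqrtr_ge0 // mulr_ge0 // sqrtr_ge0.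
Qed.

End InnerProduct.

Section Smoothness.
Context {R : realType} {dmn : nat}.
Local Notation vec := 'rV[R]_dmn.
Context {F : vec -> R} {gradF : vec -> vec} {beta : R}.
Hypothesis HgF : has_gradient F gradF.
Hypothesis beta_gt0 : 0 < beta.
Hypothesis Hsmooth : forall w w', Num.sqrt (sqnorm (gradF w - gradF w'))
                                    <= beta * Num.sqrt (sqnorm (w - w')).

Lemma derive_along_line (w h : vec) (t : R) :
  is_derive t 1 (fun s => F (w + s *: h)) (dotv (gradF (w + t *: h)) h).
Proof.
pose psi s := F (w + s *: h).
change (is_derive t 1 psi (dotv (gradF (w + t *: h)) h)).
have [dF gF] := HgF (w + t *: h).
have quotE : (fun s : R => s^-1 *: ((psi \o shift t) (s *: 1) - psi t)) =
    (fun s : R => s^-1 *: ((F \o shift (w + t *: h)) (s *: h) - F (w + t *: h))).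
  apply: funext => s /=; rewrite /psi /= [s *: 1]mulr1 scalerDl.
  by rewrite addrCA.
apply: DeriveDef; first by rewrite /derivable quotE; exact: diff_derivable.
by rewrite /derive quotE -/(derive F _ h) deriveE // gF.
Qed.

Lemma descent (w h : vec) :
  F (w + h) <= F w + dotv (gradF w) h + beta / 2 * sqnorm h.
Proof.
set k1 := dotv (gradF w) h; set k2 := beta / 2 * sqnorm h.
pose psi s := F (w + s *: h).
have dpsi t : is_derive t (1 : R) psi (dotv (gradF (w + t *: h)) h).
  exact: derive_along_line.
pose phi := psi - k1 \*: id - k2 \*: id ^+ 2.
have dphi (t : R) :
    is_derive t (1 : R) phi (dotv (gradF (w + t *: h)) h - k1 - k2 * (2 * t)).
  by apply: is_derive_eq; rewrite /= /GRing.scale /=; ring.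
have cphi : {within `[0, 1], continuous phi}.
  apply: continuous_subspaceT => t; apply: differentiable_continuous.
  by apply/derivable1_diffP; have [] := dphi t.
have [c /andP[c0 c1] phiE] := MVT ltr01 (fun t _ => dphi t) cphi.
rewrite !bnd_simp in c0 c1.
(* the slope of phi at c is <= 0 by the Lipschitz bound on the gradient *)
have grad_incr : dotv (gradF (w + c *: h) - gradF w) h <= beta * c * sqnorm h.
  apply: dotv_le_sqnorm; first by rewrite mulr_gt0.
  rewrite exprMn -mulrA -sqnormZ; apply: sqnorm_le_of_sqrt; first exact: ltW.
  by have := Hsmooth (w + c *: h) w; rewrite addrAC subrr add0r.
have : phi 1 <= phi 0.
  rewrite -subr_le0 phiE subr0 mulr1 -[dotv (gradF _) h](subrK k1) /k1 -dotvBl.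
  have -> : k2 * (2 * c) = beta * c * sqnorm h by rewrite /k2; field.
  by rewrite addrK subr_le0.
have phiE' t : phi t = F (w + t *: h) - k1 * t - k2 * t ^+ 2.
  by rewrite /phi /psi !fctE.
by rewrite !phiE' scale0r addr0 scale1r expr1n expr0n mulr1 !mulr0; lra.
Qed.

Lemma descent_gradient_step (w : vec) :
  F (w + (- beta^-1) *: gradF w) <= F w - (2 * beta)^-1 * sqnorm (gradF w).
Proof.
apply: le_trans (descent _ _) _.
rewrite le_eqVlt; apply/orP; left; apply/eqP.
rewrite dotvZr sqnormZ /sqnorm; field.
by rewrite gt_eqF.
Qed.

Lemma PL_degenerate {Fstar alpha : R} :
  (forall w, Fstar <= F w) -> beta < alpha ->
  (forall w, F w - Fstar <= (2 * alpha)^-1 * sqnorm (gradF w)) ->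
  forall w, F w = Fstar.
Proof.
move=> Hmin ba PL w.
have alpha_gt0 := lt_trans beta_gt0 ba.
have inv_lt : (2 * alpha)^-1 < (2 * beta)^-1.
  by rewrite ltf_pV2 ?posrE ?mulr_gt0 //; lra.
have grad0 : sqnorm (gradF w) = 0.
  apply/le_anti; rewrite sqnorm_ge0 andbT.
  have := descent_gradient_step w; have := Hmin (w + (- beta^-1) *: gradF w).
  have := PL w; have := sqnorm_ge0 (gradF w); nra.
by apply/le_anti; rewrite Hmin andbT -subr_le0; have := PL w; rewrite grad0 mulr0.
Qed.

End Smoothness.

(* The integral is monotone for arbitrary (not necessarily measurable)
   extended-real functions: both the positive and the negative parts are
   compared through their suprema over simple functions. *)
Lemma le_integral_pointwise {d} {T : measurableType d} {R : realType}
  (mu : measure T R) (f g : T -> \bar R) : (forall x, (f x <= g x)%E) ->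
  (\int[mu]_x f x <= \int[mu]_x g x)%E.
Proof.
move=> fg; rewrite (integralE _ _ f) (integralE _ _ g); apply: leeB.
  rewrite !ge0_integralTE //; apply: ereal_sup_le => _ [h hf <-]; exists h => //.
  move=> x; apply: le_trans (hf x) _.
  by apply: (@funepos_le _ _ setT f g); rewrite ?in_setT // => y _; exact: fg.
rewrite !ge0_integralTE //; apply: ereal_sup_le => _ [h hf <-]; exists h => //.
move=> x; apply: le_trans (hf x) _.
by apply: (@funeneg_le _ _ setT f g); rewrite ?in_setT // => y _; exact: fg.
Qed.

Lemma integral_cst_probability {d} {T : measurableType d} {R : realType}
  (P : probability T R) (r : R) : (\int[P]_x r%:E)%E = r%:E.
Proof. by rewrite integral_cst //= probability_setT mule1. Qed.

Section Batches.
Context {R : realType} {dmn : nat} {d : measure_display} {T : measurableType d}.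
Local Notation vec := 'rV[R]_dmn.
Context {X : probability T R} {gradf : vec -> T -> vec} {S : nat} {lr : R}.

Lemma iter_batches_le (g : T -> vec) k (h h' : vec -> \bar R) :
  (forall a, (h a <= h' a)%E) -> forall acc,
  (iter_batches X g k h acc <= iter_batches X g k h' acc)%E.
Proof.
move=> hh'; elim: k => [|k IH] acc /=; first exact: hh'.
by apply: le_integral_pointwise => x; exact: IH.
Qed.

Lemma iter_batches_le_cst (g : T -> vec) k (h : vec -> \bar R) (r : R) :
  (forall a, (h a <= r%:E)%E) -> forall acc, (iter_batches X g k h acc <= r%:E)%E.
Proof.
move=> hr; elim: k => [|k IH] acc /=; first exact: hr.
rewrite -(integral_cst_probability X r).
by apply: le_integral_pointwise => x; exact: IH.
Qed.

Lemma sgd_step_le (g g' : vec -> \bar R) w :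
  (forall w', (g w' <= g' w')%E) ->
  (sgd_step X gradf S lr g w <= sgd_step X gradf S lr g' w)%E.
Proof. by move=> gg'; apply: iter_batches_le => acc; exact: gg'. Qed.

Lemma sgd_expect_le_cst (lrs : nat -> R) (g : vec -> \bar R) (r : R) :
  (forall w, (g w <= r%:E)%E) ->
  forall n t0 w, (sgd_expect X gradf S lrs t0 n g w <= r%:E)%E.
Proof.
move=> gr; elim=> [|n IH] t0 w //=.
by apply: iter_batches_le_cst => acc; exact: IH.
Qed.

End Batches.

(* quad A u c a = A + <u, a> + c |a|^2: the quadratics that bound F along
   an SGD step, and whose expectations over batches stay of this form. *)
Definition quad {R : realType} {dmn : nat} (A : R) (u : 'rV[R]_dmn) (c : R)
  (a : 'rV[R]_dmn) : R := A + dotv u a + c * sqnorm a.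

Lemma quad_at0 {R : realType} {dmn : nat} (A : R) (u : 'rV[R]_dmn) (c : R) :
  quad A u c 0 = A.
Proof. by rewrite /quad /sqnorm dotvC !dotv0l mulr0 !addr0. Qed.

Section Noise.
Context {R : realType} {dmn : nat} {d : measure_display} {T : measurableType d}.
Local Notation vec := 'rV[R]_dmn.
Context {X : probability T R} {g : T -> vec} {m : vec} {V : R}.
Hypothesis g_meas : forall i, measurable_fun setT (fun x => g x ord0 i).
Hypothesis g_int : forall i, X.-integrable setT (fun x => (g x ord0 i)%:E).
Hypothesis g_mean : forall i, (\int[X]_x (g x ord0 i)%:E)%E = (m ord0 i)%:E.
Hypothesis g_var : (trace_cov X g <= V%:E)%E.

Let noise i x := g x ord0 i - m ord0 i.

Let noiseE i : (fun x => (noise i x)%:E) =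
  (fun x => (g x ord0 i)%:E - (EFin \o cst (m ord0 i)) x)%E.
Proof. by apply: funext => x; rewrite /noise EFinB. Qed.

Lemma noise_integrable i : X.-integrable setT (fun x => (noise i x)%:E).
Proof.
by rewrite noiseE; apply: integrableB => //; exact: finite_measure_integrable_cst.
Qed.

Lemma noise_mean0 i : (\int[X]_x (noise i x)%:E)%E = 0%E.
Proof.
rewrite noiseE integralB //; last exact: finite_measure_integrable_cst.
by rewrite g_mean integral_cst_probability subee.
Qed.

Lemma trace_covE : trace_cov X g = (\sum_(i < dmn) \int[X]_x ((noise i x) ^+ 2)%:E)%E.
Proof. by apply: eq_bigr => i _; rewrite g_mean. Qed.

Lemma noise_sq_integrable i : X.-integrable setT (fun x => ((noise i x) ^+ 2)%:E).
Proof.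
apply/integrableP; split.
  apply/measurable_realfun.measurable_EFinP.
  apply: measurable_realfun.measurable_funX.
  exact: (measurable_realfun.measurable_funB (g_meas i) (measurable_cst _)).
under eq_integral do rewrite gee0_abs ?lee_fin ?sqr_ge0 //.
apply: (le_lt_trans _ (ltry V)); apply: le_trans g_var.
rewrite trace_covE (bigD1 i) //=; apply: leeDl; apply: sume_ge0 => j _.
by apply: integral_ge0 => x _; rewrite lee_fin sqr_ge0.
Qed.

Lemma noise_lin_integrable (q : vec) i :
  X.-integrable setT (fun x => (q ord0 i * noise i x)%:E).
Proof.
under eq_fun do rewrite EFinM.
exact: integrableZl (noise_integrable i).
Qed.

(* Centred noise: the linear term averages out, the quadratic term
   contributes at most c V. *)
Lemma expect_quad_centered A u c b : 0 <= c ->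
  (\int[X]_x (quad A u c (b + (g x - m)))%:E <= (quad A u c b + c * V)%:E)%E.
Proof.
move=> c0; set q := u + (2 * c) *: b.
have quadE x : (quad A u c (b + (g x - m)))%:E = ((quad A u c b)%:E +
    \sum_(i < dmn) (q ord0 i * noise i x)%:E +
    c%:E * \sum_(i < dmn) (noise i x ^+ 2)%:E)%E.
  rewrite !sumEFin -EFinM -!EFinD; congr EFin.
  have -> : \sum_(i < dmn) (q ord0 i * noise i x) = dotv q (g x - m).
    by apply: eq_bigr => i _; rewrite !mxE.
  have -> : \sum_(i < dmn) (noise i x ^+ 2) = sqnorm (g x - m).
    by apply: eq_bigr => i _; rewrite !mxE expr2.
  by rewrite /quad sqnormD dotvDr /q dotvDl dotvZl; ring.
under eq_integral do rewrite quadE.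
have lin_int : X.-integrable setT
    (fun x => \sum_(i < dmn) (q ord0 i * noise i x)%:E)%E.
  by apply: integrable_sum => // i _; exact: noise_lin_integrable.
have sq_int : X.-integrable setT (fun x => \sum_(i < dmn) ((noise i x) ^+ 2)%:E)%E.
  by apply: integrable_sum => // i _; exact: noise_sq_integrable.
rewrite integralD //; last exact: integrableZl.
  rewrite integralD //; last exact: finite_measure_integrable_cst.
  rewrite integral_cst_probability integralZl // !integral_sum //;
    [|exact: noise_sq_integrable|exact: noise_lin_integrable].
  rewrite -trace_covE big1 ?adde0 => [|i _]; last first.
    under eq_integral do rewrite EFinM.
    by rewrite integralZl ?noise_mean0 ?mule0 //; exact: noise_integrable.
  rewrite -[X in (_ <= X)%E]/((quad A u c b)%:E + (c * V)%:E)%E EFinM.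
  by apply: leeD => //; apply: lee_wpmul2l; rewrite ?lee_fin.
by apply: integrableD => //; exact: finite_measure_integrable_cst.
Qed.

Lemma expect_quad A u c acc : 0 <= c ->
  (\int[X]_x (quad A u c (acc + g x))%:E <=
   (quad (A + dotv u m + c * (sqnorm m + V)) (u + (2 * c) *: m) c acc)%:E)%E.
Proof.
move=> c0; under eq_integral do rewrite -[g _](subrKC m) addrA.
apply: le_trans (expect_quad_centered _ _ _ (acc + m) c0) _.
by rewrite lee_fin /quad sqnormD !dotvDr dotvDl dotvZl (dotvC m acc); lra.
Qed.

Lemma iter_batches_quad c : 0 <= c -> forall k A u acc,
  (iter_batches X g k (fun a => (quad A u c a)%:E) acc <=
   (quad (A + k%:R * dotv u m + c * (k%:R ^+ 2 * sqnorm m + k%:R * V))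
         (u + (2 * c * k%:R) *: m) c acc)%:E)%E.
Proof.
move=> c0; elim=> [|k IH] A u acc /=.
  by rewrite lee_fin /quad dotvDl dotvZl; nra.
apply: le_trans; first by apply: le_integral_pointwise => x; exact: IH.
apply: le_trans; first exact: expect_quad.
by rewrite lee_fin /quad -natr1 !dotvDl !dotvZl -/(sqnorm m); nra.
Qed.

End Noise.

Section ScaledSGD.
Context {R : realType} {dmn : nat} {d : measure_display} {T : measurableType d}.
Local Notation vec := 'rV[R]_dmn.
Context {X : probability T R} {gradf : vec -> T -> vec} {F : vec -> R}
  {gradF : vec -> vec} {Fstar alpha beta V eta : R} {S : nat}.
Hypothesis HgF : has_gradient F gradF.
Hypothesis beta_gt0 : 0 < beta.
Hypothesis Hsmooth : forall w w', Num.sqrt (sqnorm (gradF w - gradF w'))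
                                    <= beta * Num.sqrt (sqnorm (w - w')).
Hypothesis gradf_meas : forall w i, measurable_fun setT (fun x => gradf w x ord0 i).
Hypothesis gradf_unbiased : forall w i,
  X.-integrable setT (fun x => (gradf w x ord0 i)%:E) /\
  (\int[X]_x (gradf w x ord0 i)%:E)%E = (gradF w ord0 i)%:E.
Hypothesis gradf_var : forall w, (trace_cov X (gradf w) <= V%:E)%E.
Hypothesis alpha_gt0 : 0 < alpha.
Hypothesis PL : forall w, F w - Fstar <= (2 * alpha)^-1 * sqnorm (gradF w).
Hypothesis S_gt0 : (0 < S)%N.
Hypothesis eta_gt0 : 0 < eta.
Hypothesis step_small : S%:R * eta * beta < 2.

Let s := S%:R * eta.
Let contraction := 1 - s * alpha * (2 - s * beta).
Let noise_term := S%:R * beta * eta ^+ 2 * V / 2.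

(* The update w - s (1/S) (g_1 + ... + g_S) equals w - eta (g_1 + ... + g_S);
   the descent lemma bounds F there by a quadratic in the batch sum. *)
Lemma sgd_update_descent (a b : R) (w acc : vec) : 0 <= a ->
  a * (F (w - s *: (S%:R^-1 *: acc)) - Fstar) + b <=
  quad (a * (F w - Fstar) + b) ((- (a * eta)) *: gradF w)
       (a * (beta / 2 * eta ^+ 2)) acc.
Proof.
move=> a0; have -> : w - s *: (S%:R^-1 *: acc) = w + (- eta) *: acc.
  by rewrite scalerA /s mulrAC mulfV ?mul1r ?scaleNr // pnatr_eq0 -lt0n.
have := ler_wpM2l a0 (descent HgF beta_gt0 Hsmooth w ((- eta) *: acc)).
by rewrite /quad dotvZl dotvZr sqnormZ sqrrN; lra.
Qed.

Lemma sgd_one_step (a b : R) (w : vec) : 0 <= a ->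
  (sgd_step X gradf S s (fun w' => (a * (F w' - Fstar) + b)%:E) w <=
   (a * (contraction * (F w - Fstar) + noise_term) + b)%:E)%E.
Proof.
move=> a0; have gint i := (gradf_unbiased w i).1.
have gmean i := (gradf_unbiased w i).2.
have c0 : 0 <= a * (beta / 2 * eta ^+ 2).
  by rewrite mulr_ge0 // mulr_ge0 ?sqr_ge0 // divr_ge0 // ltW.
set A := a * (F w - Fstar) + b; set u := (- (a * eta)) *: gradF w.
apply: (@le_trans _ _ (iter_batches X (gradf w) S
                         (fun acc => (quad A u (a * (beta / 2 * eta ^+ 2)) acc)%:E) 0)).
  by apply: iter_batches_le => acc; rewrite lee_fin; exact: sgd_update_descent.
apply: le_trans
  (iter_batches_quad (gradf_meas w) gint gmean (gradf_var w) _ c0 S A u 0) _.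
rewrite quad_at0 /u dotvZl -/(sqnorm _) lee_fin /A.
set P := F w - Fstar; set q := sqnorm (gradF w).
have PLq : 2 * alpha * P <= q.
  have := ler_wpM2l (ltW (mulr_gt0 (ltr0Sn _ 1) alpha_gt0)) (PL w).
  by rewrite mulrA mulfV ?mul1r // gt_eqF // mulr_gt0.
have s_gt0 : 0 < s by rewrite mulr_gt0 // ltr0n.
have rate_ge0 : 0 <= a * (s * (2 - s * beta)).
  by rewrite mulr_ge0 // mulr_ge0 ?ltW // subr_gt0.
rewrite -subr_ge0; set gap := (X in 0 <= X).
have -> : gap = a * (s * (2 - s * beta)) / 2 * (q - 2 * alpha * P).
  by rewrite /gap /contraction /noise_term /s; field.
by rewrite mulr_ge0 ?divr_ge0 // subr_ge0.
Qed.

Lemma sgd_iterate (K : R) : 0 <= contraction -> noise_term = (1 - contraction) * K ->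
  forall n t0 w, (sgd_expect X gradf S (fun=> s) t0 n (fun w => (F w - Fstar)%:E) w <=
    (contraction ^+ n * (F w - Fstar) + (1 - contraction ^+ n) * K)%:E)%E.
Proof.
move=> c0 noiseE; elim=> [|n IH] t0 w /=.
  by rewrite expr0 mul1r subrr mul0r addr0.
apply: le_trans; first by apply: sgd_step_le => w'; exact: IH.
apply: le_trans (sgd_one_step _ _ w (exprn_ge0 n c0)) _.
rewrite lee_fin noiseE exprS le_eqVlt; apply/orP; left; apply/eqP; ring.
Qed.

End ScaledSGD.

(* The contraction factor 1 - s alpha (2 - s beta) is nonnegative whenever
   alpha <= beta: it equals (1 - s alpha)^2 + s^2 alpha (beta - alpha). *)
Lemma contraction_ge0 {R : realFieldType} (s alpha beta : R) :
  0 <= alpha -> alpha <= beta -> 0 <= 1 - s * alpha * (2 - s * beta).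
Proof.
move=> a0 ab; have := sqr_ge0 (1 - s * alpha).
have : 0 <= beta - alpha by rewrite subr_ge0.
move/(mulr_ge0 (mulr_ge0 (sqr_ge0 s) a0)); nra.
Qed.

Lemma bernoulli_le {R : realFieldType} (x : R) (n : nat) :
  0 <= x -> n%:R * x <= 1 -> 1 - n%:R * x <= (1 - x) ^+ n.
Proof.
move=> x0; elim: n => [|n IH] nx1; first by rewrite expr0 mul0r subr0.
rewrite -natr1 in nx1 *; have nx0 := mulr_ge0 (ler0n R n) x0.
have x1 : 0 <= 1 - x by lra.
have := ler_wpM2l x1 (IH ltac:(lra)); have := mulr_ge0 nx0 x0.
rewrite exprS; nra.
Qed.

Lemma scaled_sgd_constants {R : realFieldType} (S : nat) (eta alpha beta V : R) :
  0 < eta -> 0 < alpha -> 0 < beta -> 0 <= V -> (0 < S)%N ->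
  S%:R * eta * beta < 2 ->
  let gamma := eta * alpha * (2 - eta * beta) in
  let Delta := (2 * gamma)^-1 * (eta ^+ 2 * beta * V) in
  let xi := (2 - eta * beta) / (2 - S%:R * eta * beta) in
  let c := 1 - S%:R * eta * alpha * (2 - S%:R * eta * beta) in
  [/\ 0 <= gamma / xi, 0 <= xi * Delta, c = 1 - S%:R * (gamma / xi) &
      S%:R * beta * eta ^+ 2 * V / 2 = (1 - c) * (xi * Delta)].
Proof.
move=> eta_gt0 alpha_gt0 beta_gt0 V_ge0 S_gt0 step_small gamma Delta xi c.
have eta_beta_lt2 : eta * beta < 2.
  apply: le_lt_trans step_small; rewrite -mulrA ler_peMl ?ler1n //.
  by rewrite mulr_ge0 ?ltW.
have xi_gt0 : 0 < xi by rewrite divr_gt0 ?subr_gt0.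
have gamma_gt0 : 0 < gamma by rewrite mulr_gt0 ?mulr_gt0 // subr_gt0.
split.
- by rewrite divr_ge0 ?ltW.
- apply: mulr_ge0; first exact: ltW.
  apply: mulr_ge0; first by rewrite invr_ge0 ltW // mulr_gt0.
  by rewrite mulr_ge0 // mulr_ge0 ?sqr_ge0 // ltW.
- by rewrite /c /xi /gamma; field; rewrite !gt_eqF ?subr_gt0.
- by rewrite /c /xi /Delta /gamma; field; rewrite !gt_eqF ?mulr_gt0 ?subr_gt0.
Qed.

Lemma geometric_bound {R : realFieldType} (c r P K : R) (n : nat) :
  0 <= c -> c <= r -> 0 <= P -> 0 <= K ->
  c ^+ n * P + (1 - c ^+ n) * K <= r ^+ n * P + K.
Proof.
move=> c0 cr P0 K0; have := lerXn2r n c0 (le_trans c0 cr) cr.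
have := exprn_ge0 n c0; nra.
Qed.

Theorem theorem3 (R : realType) (dmn : nat) (d : measure_display)
  (T : measurableType d) (X : probability T R)
  (f : 'rV[R]_dmn -> T -> R) (gradf : 'rV[R]_dmn -> T -> 'rV[R]_dmn)
  (F : 'rV[R]_dmn -> R) (gradF : 'rV[R]_dmn -> 'rV[R]_dmn)
  (Fstar alpha beta V eta : R) (S T_it : nat) (w0 : 'rV[R]_dmn) :
  (forall w, X.-integrable setT (fun x => (f w x)%:E) /\
             (\int[X]_x (f w x)%:E)%E = (F w)%:E) ->
  (forall x, has_gradient (fun w => f w x) (fun w => gradf w x)) ->
  has_gradient F gradF ->
  (forall w (i : 'I_dmn), measurable_fun setT (fun x => gradf w x ord0 i)) ->
  (forall w (i : 'I_dmn), X.-integrable setT (fun x => (gradf w x ord0 i)%:E) /\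
     (\int[X]_x (gradf w x ord0 i)%:E)%E = (gradF w ord0 i)%:E) ->
  (exists wstar, F wstar = Fstar) -> (forall w, Fstar <= F w) ->
  0 < alpha -> (forall w, F w - Fstar <= (2 * alpha)^-1 * sqnorm (gradF w)) ->
  0 < beta ->
  (forall w w', Num.sqrt (sqnorm (gradF w - gradF w'))
                 <= beta * Num.sqrt (sqnorm (w - w'))) ->
  0 <= V -> (forall w, (trace_cov X (gradf w) <= V%:E)%E) ->
  (0 < S)%N ->
  0 < eta -> eta < 2 / (S%:R * beta) ->
  let gamma := eta * alpha * (2 - eta * beta) in
  let Delta := (2 * gamma)^-1 * (eta ^+ 2 * beta * V) in
  let xi := (2 - eta * beta) / (2 - S%:R * eta * beta) in
  (sgd_expect X gradf S (fun _ => (S%:R * eta)%R) 0 T_it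
     (fun w => (F w - Fstar)%:E) w0
   <= ((1 - gamma / xi) ^+ (S * T_it)%N * (F w0 - Fstar) + xi * Delta)%R%:E)%E.
Proof.
move=> _ _ HgF gradf_meas gradf_unbiased _ Fmin alpha_gt0 PL beta_gt0 Hsmooth
  V_ge0 gradf_var S_gt0 eta_gt0 eta_small; cbv zeta.
have step_small : S%:R * eta * beta < 2.
  by move: eta_small; rewrite ltr_pdivlMr ?mulr_gt0 ?ltr0n // mulrCA mulrA.
have := scaled_sgd_constants S eta alpha beta V eta_gt0 alpha_gt0 beta_gt0 V_ge0 S_gt0 step_small.
cbv zeta; set gamma := eta * alpha * (2 - eta * beta).
set Delta := (2 * gamma)^-1 * (eta ^+ 2 * beta * V).
set xi := (2 - eta * beta) / (2 - S%:R * eta * beta).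
set c := 1 - S%:R * eta * alpha * (2 - S%:R * eta * beta).
move=> [rate_ge0 K_ge0 rateE noiseE].
have [alpha_le_beta | beta_lt_alpha] := lerP alpha beta; last first.
  have F_const := PL_degenerate HgF beta_gt0 Hsmooth Fmin beta_lt_alpha PL.
  apply: le_trans (sgd_expect_le_cst _ _ 0 _ _ _ _) _.
    by move=> w; rewrite F_const subrr.
  by rewrite F_const subrr mulr0 add0r lee_fin.
have c_ge0 : 0 <= c by apply: contraction_ge0 => //; exact: ltW.
apply: le_trans (sgd_iterate HgF beta_gt0 Hsmooth gradf_meas gradf_unbiased
  gradf_var alpha_gt0 PL S_gt0 eta_gt0 step_small _ c_ge0 noiseE T_it 0 w0) _.
rewrite lee_fin exprM; apply: geometric_bound => //; last by rewrite subr_ge0.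
(* Bernoulli: c = 1 - S (gamma / xi) <= (1 - gamma / xi)^S *)
by rewrite -/c rateE; apply: bernoulli_le; rewrite // -subr_ge0 -rateE.
Qed.
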